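(* Let $(X,Y)$ be any one of the pairs $(F,L)$, $(L,F)$, $(J,j)$, $(j,J)$, $(P,Q)$, $(Q,P)$. Then for all integers $a,b,c,d,e,m$, $$(X_{d-a}Y_{e-b}-X_{e-a}Y_{d-b})X_{m-c}=(X_{d-c}Y_{e-b}-X_{e-c}Y_{d-b})X_{m-a}+(X_{d-a}X_{e-c}-X_{e-a}X_{d-c})Y_{m-b}.$$
   Context: All sequences are indexed by $n\in\mathbb Z$. Fibonacci numbers $F_n$ and Lucas numbers $L_n$: $F_n=F_{n-1}+F_{n-2}$, $L_n=L_{n-1}+L_{n-2}$ for all $n\in\mathbb Z$, with $F_0=0,F_1=1,L_0=2,L_1=1$ (so $F_{-n}=(-1)^{n-1}F_n$, $L_{-n}=(-1)^nL_n$). Jacobsthal numbers $J_n$ and Jacobsthal–Lucas numbers $j_n$: $J_n=J_{n-1}+2J_{n-2}$, $j_n=j_{n-1}+2j_{n-2}$ for all $n\in\mathbb Z$, with $J_0=0,J_1=1,j_0=2,j_1=1$ (so $J_{-n}=(-1)^{n-1}2^{-n}J_n$, $j_{-n}=(-1)^n2^{-n}j_n$, rational for negative index). Pell numbers $P_n$ and Pell–Lucas numbers $Q_n$: $P_n=2P_{n-1}+P_{n-2}$, $Q_n=2Q_{n-1}+Q_{n-2}$ for all $n\in\mathbb Z$, with $P_0=0,P_1=1,Q_0=2,Q_1=2$ (so $P_{-n}=(-1)^{n-1}P_n$, $Q_{-n}=(-1)^nQ_n$). *)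

From HB Require Import structures.
From mathcomp Require Import all_boot all_order all_algebra.
Set Implicit Arguments. Unset Strict Implicit. Unset Printing Implicit Defensive.
Import Order.TTheory GRing.Theory Num.Theory.
Local Open Scope ring_scope.

(* Forward iteration: fw n = (u_n, u_(n+1)) for u_n = p u_(n-1) + q u_(n-2),
   u_0 = a, u_1 = b. *)
Fixpoint fw (p q a b : rat) (n : nat) : rat * rat :=
  match n with
  | O => (a, b)
  | S k => let: (x, y) := fw p q a b k in (y, p * y + q * x)
  end.

(* Backward iteration: bw n = (u_(-n), u_(-n+1)), using
   u_(k-2) = (u_k - p u_(k-1)) / q. *)
Fixpoint bw (p q a b : rat) (n : nat) : rat * rat :=
  match n with
  | O => (a, b)
  | S k => let: (x, y) := bw p q a b k in ((y - p * x) / q, x)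
  end.

Definition rec2 (p q a b : rat) (z : int) : rat :=
  match z with
  | Posz n => (fw p q a b n).1
  | Negz n => (bw p q a b n.+1).1   (* Negz n = -(n+1) *)
  end.

Definition Fib   : int -> rat := rec2 1 1 0 1.
Definition Luc   : int -> rat := rec2 1 1 2 1.
Definition Jac   : int -> rat := rec2 1 2 0 1.
Definition JacL  : int -> rat := rec2 1 2 2 1.
Definition Pell  : int -> rat := rec2 2 1 0 1.
Definition PellL : int -> rat := rec2 2 1 2 2.

(* Every sequence satisfying u_(n+2) = p u_(n+1) + q u_n with q <> 0 is
   determined by u_0 and u_1, linearly: for each index n there are scalars
   alpha, beta with u_n = alpha u_0 + beta u_1 for ALL such sequences u
   simultaneously.  The identity is the vanishing of the determinant of the
   three solutions n |-> X_(n-a), Y_(n-b), X_(n-c) sampled at d, e, m: the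
   three columns are combinations of the columns at 0 and 1. *)

From HB Require Import structures.
From mathcomp Require Import all_boot all_order all_algebra.
From mathcomp Require Import ring zify.
Import GRing.Theory.

Set Implicit Arguments.
Unset Strict Implicit.
Local Open Scope ring_scope.

Definition linrec2 (R : pzRingType) (p q : R) (s : int -> R) :=
  forall z : int, s (z + 2) = p * s (z + 1) + q * s z.

Lemma linrec2_shift (R : pzRingType) (p q : R) (s : int -> R) (a : int) :
  linrec2 p q s -> linrec2 p q (fun n => s (n - a)).
Proof. by move=> hs z; rewrite /= !(addrAC z _ (- a)) hs. Qed.

Section LinearSpan.

Variables (R : fieldType) (p q : R).
Hypothesis q_neq0 : q != 0.

Let in_span (n : int) := exists alpha beta : R,
  forall s, linrec2 p q s -> s n = alpha * s 0 + beta * s 1.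

Let in_span_up (z : int) : in_span z -> in_span (z + 1) -> in_span (z + 2).
Proof.
move=> [al [be h]] [al' [be' h']].
exists (p * al' + q * al), (p * be' + q * be) => s hs.
by rewrite hs (h s) // (h' s) //; ring.
Qed.

Let in_span_down (z : int) : in_span (z + 1) -> in_span (z + 2) -> in_span z.
Proof.
move=> [al [be h]] [al' [be' h']].
exists ((al' - p * al) / q), ((be' - p * be) / q) => s hs.
have -> : s z = (s (z + 2) - p * s (z + 1)) / q by rewrite hs; field.
by rewrite (h s) // (h' s) //; field.
Qed.

Lemma linrec2_span (n : int) : exists alpha beta : R,
  forall s, linrec2 p q s -> s n = alpha * s 0 + beta * s 1.
Proof.
have span0 : in_span 0 by exists 1, 0 => s _; ring.
have span1 : in_span 1 by exists 0, 1 => s _; ring.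
case: n => k.
- suff /(_ k) [] : forall k : nat, in_span k /\ in_span (k%:Z + 1) by [].
  elim=> [|j [hj hj1]]; first by [].
  have -> : Posz j.+1 = j%:Z + 1 by lia.
  have -> : j%:Z + 1 + 1 = j%:Z + 2 by lia.
  by split=> //; exact: in_span_up.
- rewrite NegzE.
  suff /(_ k.+1) [] : forall k : nat, in_span (- k%:Z) /\ in_span (- k%:Z + 1).
    by [].
  elim=> [|j [hj hj1]]; first by rewrite oppr0 add0r.
  have E1 : - Posz j.+1 + 1 = - j%:Z by lia.
  have E2 : - Posz j.+1 + 2 = - j%:Z + 1 by lia.
  rewrite E1; split=> //.
  by apply: in_span_down; rewrite ?E1 ?E2.
Qed.

Lemma linrec2_det3 (s t w : int -> R) :
  linrec2 p q s -> linrec2 p q t -> linrec2 p q w ->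
  forall d e m : int,
    (s d * t e - s e * t d) * w m =
    (w d * t e - w e * t d) * s m + (s d * w e - s e * w d) * t m.
Proof.
move=> hs ht hw d e m.
have [ad [bd hd]] := linrec2_span d.
have [ae [be he]] := linrec2_span e.
have [am [bm hm]] := linrec2_span m.
rewrite (hd s) // (he s) // (hm s) // (hd t) // (he t) // (hm t) //.
by rewrite (hd w) // (he w) // (hm w) //; ring.
Qed.

End LinearSpan.

Lemma fwS_fst (p q a b : rat) (k : nat) : (fw p q a b k.+1).1 = (fw p q a b k).2.
Proof. by rewrite /=; case: (fw p q a b k). Qed.

Lemma fwS_snd (p q a b : rat) (k : nat) :
  (fw p q a b k.+1).2 = p * (fw p q a b k).2 + q * (fw p q a b k).1.
Proof. by rewrite /=; case: (fw p q a b k). Qed.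

Lemma bwS_fst (p q a b : rat) (k : nat) :
  (bw p q a b k.+1).1 = ((bw p q a b k).2 - p * (bw p q a b k).1) / q.
Proof. by rewrite /=; case: (bw p q a b k). Qed.

Lemma bwS_snd (p q a b : rat) (k : nat) : (bw p q a b k.+1).2 = (bw p q a b k).1.
Proof. by rewrite /=; case: (bw p q a b k). Qed.

Lemma rec2_linrec2 (p q a b : rat) : q != 0 -> linrec2 p q (rec2 p q a b).
Proof.
move=> q_neq0 [n|[|[|n]]].
- have -> : Posz n + 2 = Posz n.+2 by lia.
  have -> : Posz n + 1 = Posz n.+1 by lia.
  by rewrite /rec2 !fwS_fst fwS_snd.
- have -> : Negz 0 + 2 = Posz 1 by lia.
  have -> : Negz 0 + 1 = Posz 0 by lia.
  by rewrite /rec2 fwS_fst bwS_fst /=; field.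
- have -> : Negz 1 + 2 = Posz 0 by lia.
  have -> : Negz 1 + 1 = Negz 0 by lia.
  by rewrite /rec2 [(bw _ _ _ _ 2).1]bwS_fst bwS_snd bwS_fst /=; field.
- have -> : Negz n.+2 + 2 = Negz n by lia.
  have -> : Negz n.+2 + 1 = Negz n.+1 by lia.
  by rewrite /rec2 [(bw _ _ _ _ n.+3).1]bwS_fst bwS_snd; field.
Qed.

Theorem theorem1 (X Y : int -> rat) :
  (X = Fib /\ Y = Luc) \/ (X = Luc /\ Y = Fib) \/
  (X = Jac /\ Y = JacL) \/ (X = JacL /\ Y = Jac) \/
  (X = Pell /\ Y = PellL) \/ (X = PellL /\ Y = Pell) ->
  forall a b c d e m : int,
    (X (d - a) * Y (e - b) - X (e - a) * Y (d - b)) * X (m - c) =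
    (X (d - c) * Y (e - b) - X (e - c) * Y (d - b)) * X (m - a)
    + (X (d - a) * X (e - c) - X (e - a) * X (d - c)) * Y (m - b).
Proof.
move=> hXY a b c d e m.
have [p [q [hX hY q_neq0]]] : exists p q : rat,
    [/\ linrec2 p q X, linrec2 p q Y & q != 0].
  by case: hXY => [[->->]|[[->->]|[[->->]|[[->->]|[[->->]|[->->]]]]]];
    do 2 eexists; split; do ?apply: rec2_linrec2.
exact: (linrec2_det3 q_neq0 (linrec2_shift a hX) (linrec2_shift b hY)
  (linrec2_shift c hX)).
Qed.
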